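(* Let $(S,\Delta,\mathbb{P})$ be a probability space, $(U,d)$ a separable metric space, $\mathfrak{X}$ the set of $U$-valued random variables on $S$, $\mathcal{I}$ an ideal on $\mathbb{N}$, and $\underline{X}=\{X_n\}$, $\underline{Y}=\{Y_n\}$ sequences in $\mathfrak{X}$ that are $\mathcal{I}$-almost surely equal, i.e. $\{n\in\mathbb{N}:\mathbb{P}(X_n=Y_n)=1\}\in\mathcal{F}(\mathcal{I})$. Then for every $r\geq 0$: $\Lambda^{r}_{\underline{X}}(\mathcal{I}^{\mathbb{P}})=\Lambda^{r}_{\underline{Y}}(\mathcal{I}^{\mathbb{P}})$, $\Gamma^{r^s}_{\underline{X}}(\mathcal{I}^{\mathbb{P}})=\Gamma^{r^s}_{\underline{Y}}(\mathcal{I}^{\mathbb{P}})$, and $\Gamma^{r^w}_{\underline{X}}(\mathcal{I}^{\mathbb{P}})=\Gamma^{r^w}_{\underline{Y}}(\mathcal{I}^{\mathbb{P}})$.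
   Context: An ideal on $\mathbb{N}$ is a family $\mathcal{I}\subseteq\mathcal{P}(\mathbb{N})$ with $\varnothing\in\mathcal{I}$, closed under finite unions and under subsets; $\mathcal{F}(\mathcal{I})=\{A\subseteq\mathbb{N}:\mathbb{N}\setminus A\in\mathcal{I}\}$. For a sequence $\underline{X}=\{X_n\}$ in $\mathfrak{X}$ and $r\geq0$: $\Lambda^{r}_{\underline{X}}(\mathcal{I}^{\mathbb{P}})$ is the set of $Y\in\mathfrak{X}$ for which there is $A\subseteq\mathbb{N}$, $A\notin\mathcal{I}$, with $\lim_{n\in A}\mathbb{P}(d(X_n,Y)\geq r+\varepsilon)=0$ for every $\varepsilon>0$ (limit along $A$ in increasing order); $\Gamma^{r^s}_{\underline{X}}(\mathcal{I}^{\mathbb{P}})$ is the set of $Y\in\mathfrak{X}$ with $\{n:\mathbb{P}(d(X_n,Y)<r+\varepsilon)>1-\delta\}\notin\mathcal{I}$ for all $\varepsilon,\delta>0$; $\Gamma^{r^w}_{\underline{X}}(\mathcal{I}^{\mathbb{P}})$ is the set of $Y\in\mathfrak{X}$ for which there is $\delta_*=\delta_*(Y)>0$ with $\{n:\mathbb{P}(d(X_n,Y)<r+\varepsilon)>\delta_*\}\notin\mathcal{I}$ for every $\varepsilon>0$. *)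

From HB Require Import structures.
From mathcomp Require Import all_boot all_order all_algebra.
From mathcomp Require Import all_classical all_reals all_analysis.
Set Implicit Arguments. Unset Strict Implicit. Unset Printing Implicit Defensive.
Import Order.TTheory GRing.Theory Num.Theory.
Local Open Scope classical_set_scope.
Local Open Scope ring_scope.

Definition is_ideal (I : set (set nat)) : Prop :=
  [/\ I set0,
      (forall A B, I A -> I B -> I (A `|` B)) &
      (forall A B, B `<=` A -> I A -> I B)].

Definition filter_of_ideal (I : set (set nat)) : set (set nat) :=
  [set A | I (~` A)].

Definition is_metric (R : realType) (U : Type) (dist : U -> U -> R) : Prop :=
  [/\ (forall x y, 0 <= dist x y),
      (forall x y, dist x y = 0 <-> x = y),
      (forall x y, dist x y = dist y x) &
      (forall x y z, dist x z <= dist x y + dist y z)].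

Definition mopen (R : realType) (U : Type) (dist : U -> U -> R) (A : set U) :=
  forall x, A x -> exists2 e : R, 0 < e & [set y | dist x y < e] `<=` A.

Definition separable (R : realType) (U : Type) (dist : U -> U -> R) : Prop :=
  exists D : set U, countable D /\
    forall x (e : R), 0 < e -> exists2 y, D y & dist x y < e.

Definition mborel (R : realType) (U : Type) (dist : U -> U -> R) : set (set U) :=
  <<s [set A | mopen dist A] >>.

Definition random_var (dT : measure_display) (T : measurableType dT)
  (R : realType) (U : Type) (dist : U -> U -> R) (X : T -> U) : Prop :=
  forall B, mborel dist B -> measurable (X @^-1` B).

Notation lte := (@Order.lt _ (\bar _)).

Section Sets.
Context (dT : measure_display) (T : measurableType dT) (R : realType)
  (P : probability T R) (U : Type) (dist : U -> U -> R) (I : set (set nat)).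

Definition LambdaP (X : nat -> T -> U) (r : R) : set (T -> U) :=
  [set Y | random_var dist Y /\
     exists A : set nat, ~ I A /\
       forall e : R, 0 < e ->
         (* lim_{n in A} P(d(X_n,Y) >= r+e) = 0 *)
         forall eta : R, 0 < eta -> exists N : nat, forall n, A n -> (N <= n)%N ->
           lte (P [set s | r + e <= dist (X n s) (Y s)]) (eta%:E)].

Definition GammaS (X : nat -> T -> U) (r : R) : set (T -> U) :=
  [set Y | random_var dist Y /\
     forall e delta : R, 0 < e -> 0 < delta ->
       ~ I [set n | lte ((1 - delta)%:E) (P [set s | dist (X n s) (Y s) < r + e])]].

Definition GammaW (X : nat -> T -> U) (r : R) : set (T -> U) :=
  [set Y | random_var dist Y /\
     exists2 delta : R, 0 < delta &
       forall e : R, 0 < e ->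
       ~ I [set n | lte (delta%:E) (P [set s | dist (X n s) (Y s) < r + e])]].

End Sets.

From HB Require Import structures.
From mathcomp Require Import all_boot all_order all_algebra.
From mathcomp Require Import all_classical all_reals all_analysis.
From mathcomp Require Import lra.
Import Order.TTheory GRing.Theory Num.Theory.
Local Open Scope classical_set_scope.
Local Open Scope ring_scope.

(* On the set G of indices n with P(X_n = Y_n) = 1, whose complement lies in
   the ideal, the events {d(X_n, Z) < c} and {d(Y_n, Z) < c} differ by a null
   set, so they have the same probability; separability of U is what makes
   these events measurable. Each of the three sets only looks at such
   probabilities along index sets outside the ideal, and a set outside the
   ideal stays outside it after intersection with G. So membership passes from
   X to Y, and back by symmetry. *)

Set Implicit Arguments.
Unset Strict Implicit.
Unset Printing Implicit Defensive.

Lemma bigcup_measurable_countable (d : measure_display) (T : sigmaRingType d)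
    (V : Type) (D : set V) (F : V -> set T) :
  countable D -> (forall v, D v -> measurable (F v)) ->
  measurable (\bigcup_(v in D) F v).
Proof.
move=> /countable_injP[f injf] mF.
have [->|/set0P[v0 Dv0]] := eqVneq D set0; first by rewrite bigcup_set0.
rewrite -(injpinv_image (cst v0) injf) bigcup_image.
apply: bigcup_measurable => _ [v Dv <-].
by rewrite pinvKV ?inE//; apply: mF.
Qed.

Lemma eq_measure_conull (d : measure_display) (T : measurableType d)
    (R : realType) (mu : {measure set T -> \bar R}) (A B E : set T) :
  measurable A -> measurable B -> measurable E -> mu (~` E) = 0%E ->
  A `&` E = B `&` E -> mu A = mu B.
Proof.
move=> mA mB mE muCE0 ABE.
have muDE0 C : measurable C -> mu (C `\` E) = 0%E.
  move=> mC; apply: (subset_measure0 (measurableD mC mE) (measurableC mE)) => //.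
transitivity (mu (A `\` E) + mu (A `&` E))%E; first exact: measureDI.
transitivity (mu (B `\` E) + mu (B `&` E))%E; last by rewrite -measureDI.
by rewrite !muDE0// ABE.
Qed.

Lemma ideal_subI (I : set (set nat)) (G B C : set nat) :
  is_ideal I -> I (~` G) -> I C -> B `&` G `<=` C -> I B.
Proof.
move=> [_ IU IS] IG IC BGC; apply: (IS _ _ _ (IU _ _ IC IG)) => n Bn.
by have [Gn|] := pselect (G n); [left; apply: BGC|right].
Qed.

Section MetricRandomVariables.
Variables (dT : measure_display) (T : measurableType dT) (R : realType).
Variables (U : Type) (dist : U -> U -> R).
Hypotheses (dist_metric : is_metric dist) (dist_separable : separable dist).

Lemma mopen_ball x e : mopen dist [set y | dist x y < e].
Proof.
have [_ _ _ dist_triangle] := dist_metric.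
move=> y /= xy; exists (e - dist x y); first by rewrite subr_gt0.
by move=> z /= yz; apply: le_lt_trans (dist_triangle x y z) _; rewrite -ltrBrDl.
Qed.

Lemma measurable_preimage_ball (Z : T -> U) x e :
  random_var dist Z -> measurable (Z @^-1` [set y | dist x y < e]).
Proof. by move=> rZ; apply: rZ; apply: sub_gen_smallest; apply: mopen_ball. Qed.

Lemma measurable_dist_lt (X Y : T -> U) c :
  random_var dist X -> random_var dist Y ->
  measurable [set s | dist (X s) (Y s) < c].
Proof.
move=> rX rY; have [D [countD denseD]] := dist_separable.
have [_ _ dist_sym dist_triangle] := dist_metric.
suff -> : [set s | dist (X s) (Y s) < c] = \bigcup_(x in D) \bigcup_(q : rat)
    (X @^-1` [set y | dist x y < ratr q] `&`
     Y @^-1` [set y | dist x y < c - ratr q]).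
  apply: bigcup_measurable_countable => // x _.
  apply: bigcupT_measurable_rat => q.
  by apply: measurableI; apply: measurable_preimage_ball.
apply/seteqP; split => s /=; last first.
  move=> [x _] [q _] [/= Xq Yq].
  have := dist_triangle (X s) x (Y s); have := dist_sym (X s) x; lra.
move=> XYc; have e0 : 0 < (c - dist (X s) (Y s)) / 3.
  by rewrite divr_gt0 // subr_gt0.
have [x Dx Xx] := denseD (X s) _ e0.
have [q] : exists q : rat, ratr q \in
    `]dist x (X s), dist x (X s) + (c - dist (X s) (Y s)) / 3[.
  by apply: rat_in_itvoo; rewrite ltrDl.
rewrite in_itv /= => /andP[q1 q2].
exists x => //; exists q => //; split => //=.
have := dist_triangle x (X s) (Y s); have := dist_sym (X s) x; lra.
Qed.

Lemma measurable_dist_ge (X Y : T -> U) c :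
  random_var dist X -> random_var dist Y ->
  measurable [set s | c <= dist (X s) (Y s)].
Proof.
move=> rX rY; rewrite (_ : [set s | _] = ~` [set s | dist (X s) (Y s) < c]).
  by apply: measurableC; apply: measurable_dist_lt.
by apply/seteqP; split => s /=; rewrite leNgt => /negP.
Qed.

Lemma measurable_eq (X Y : T -> U) :
  random_var dist X -> random_var dist Y -> measurable [set s | X s = Y s].
Proof.
move=> rX rY; have [dist_ge0 dist_eq0 _ _] := dist_metric.
suff -> : [set s | X s = Y s] =
    \bigcap_n [set s | dist (X s) (Y s) < n.+1%:R^-1].
  by apply: bigcapT_measurable => n; apply: measurable_dist_lt.
apply/seteqP; split => s /=.
  by move=> XY n _; rewrite /= (proj2 (dist_eq0 _ _) XY) invr_gt0.
move=> small; apply/dist_eq0/eqP; rewrite eq_le dist_ge0 andbT leNgt.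
apply/negP => dpos; set n := Num.Def.archi_bound (dist (X s) (Y s))^-1.
have n_gt : (dist (X s) (Y s))^-1 < n%:R by apply/archi_boundP/ltW; rewrite invr_gt0.
have := small n I; rewrite /= -[X in X < _]invrK ltf_pV2 ?posrE ?invr_gt0//.
by move=> /lt_trans /(_ n_gt); rewrite ltr_nat => /ltnW; rewrite ltnn.
Qed.

End MetricRandomVariables.

Section AlmostSurelyEqualSequences.
Variables (dT : measure_display) (T : measurableType dT) (R : realType).
Variables (P : probability T R) (U : Type) (dist : U -> U -> R).
Variables (I : set (set nat)) (X Y : nat -> T -> U) (G : set nat).
Hypotheses (dist_metric : is_metric dist) (dist_separable : separable dist).
Hypotheses (I_ideal : is_ideal I) (IG : I (~` G)).
Hypotheses (rX : forall n, random_var dist (X n)) (rY : forall n, random_var dist (Y n)).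
Hypothesis XY_as : forall n, G n -> P [set s | X n s = Y n s] = 1%E.

Lemma prob_eq_as n (A B : set T) : G n -> measurable A -> measurable B ->
  A `&` [set s | X n s = Y n s] = B `&` [set s | X n s = Y n s] -> P A = P B.
Proof.
move=> Gn mA mB; have mE := measurable_eq dist_metric dist_separable (rX n) (rY n).
apply: eq_measure_conull => //.
by have := probability_setC P mE; rewrite XY_as // subee.
Qed.

Lemma prob_dist_lt_as n (Z : T -> U) c : G n -> random_var dist Z ->
  P [set s | dist (X n s) (Z s) < c] = P [set s | dist (Y n s) (Z s) < c].
Proof.
move=> Gn rZ; apply: (prob_eq_as Gn);
  [exact: measurable_dist_lt|exact: measurable_dist_lt|].
by apply/seteqP; split => s [/= + XYs]; rewrite XYs.
Qed.

Lemma prob_dist_ge_as n (Z : T -> U) c : G n -> random_var dist Z ->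
  P [set s | c <= dist (X n s) (Z s)] = P [set s | c <= dist (Y n s) (Z s)].
Proof.
move=> Gn rZ; apply: (prob_eq_as Gn);
  [exact: measurable_dist_ge|exact: measurable_dist_ge|].
by apply/seteqP; split => s [/= + XYs]; rewrite XYs.
Qed.

Lemma LambdaP_subset_as r : LambdaP P dist I X r `<=` LambdaP P dist I Y r.
Proof.
move=> Z [rZ [A [IA limA]]]; split => //; exists (A `&` G); split.
  by move=> IAG; apply: IA; apply: ideal_subI I_ideal IG IAG _.
move=> e e0 eta eta0; have [N limN] := limA e e0 eta eta0.
by exists N => n [An Gn] Nn; rewrite -prob_dist_ge_as//; apply: limN.
Qed.

Lemma GammaS_subset_as r : GammaS P dist I X r `<=` GammaS P dist I Y r.
Proof.
move=> Z [rZ GZ]; split => // e delta e0 delta0 IY; apply: (GZ e delta e0 delta0).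
by apply: ideal_subI I_ideal IG IY _ => n [/= + Gn]; rewrite prob_dist_lt_as.
Qed.

Lemma GammaW_subset_as r : GammaW P dist I X r `<=` GammaW P dist I Y r.
Proof.
move=> Z [rZ [delta delta0 GZ]]; split => //; exists delta => // e e0 IY.
apply: (GZ e e0); apply: ideal_subI I_ideal IG IY _ => n [/= + Gn].
by rewrite prob_dist_lt_as.
Qed.

End AlmostSurelyEqualSequences.

Theorem proposition3p7 (dT : measure_display) (T : measurableType dT)
  (R : realType) (P : probability T R) (U : Type) (dist : U -> U -> R)
  (I : set (set nat)) (X Y : nat -> T -> U) :
  is_metric dist -> separable dist -> is_ideal I ->
  (forall n, random_var dist (X n)) -> (forall n, random_var dist (Y n)) ->
  filter_of_ideal I [set n | P [set s | X n s = Y n s] = 1%E] ->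
  forall r : R, 0 <= r ->
    [/\ LambdaP P dist I X r = LambdaP P dist I Y r,
        GammaS P dist I X r = GammaS P dist I Y r &
        GammaW P dist I X r = GammaW P dist I Y r].
Proof.
move=> metric sep ideal rX rY IG r _.
have YX_as n : P [set s | X n s = Y n s] = 1%E -> P [set s | Y n s = X n s] = 1%E.
  by move=> <-; congr (P _); apply/eq_set => s; apply/propext; split=> ->.
split; rewrite eqEsubset; split.
- exact: (LambdaP_subset_as metric sep ideal IG rX rY (fun _ => id)).
- exact: (LambdaP_subset_as metric sep ideal IG rY rX YX_as).
- exact: (GammaS_subset_as metric sep ideal IG rX rY (fun _ => id)).
- exact: (GammaS_subset_as metric sep ideal IG rY rX YX_as).
- exact: (GammaW_subset_as metric sep ideal IG rX rY (fun _ => id)).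
- exact: (GammaW_subset_as metric sep ideal IG rY rX YX_as).
Qed.
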